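(* Let $n\ge 1$, $c>0$, $m$, $\hbar\neq 0$ be constants and let $\omega^0,\omega^1\in(-\pi/2,\pi/2]$. Let $a_\ast$ be a nowhere vanishing, differentiable complex-valued function of $t\in\mathbb{R}$ such that $\theta:=\arg a_\ast(t)$ is a constant independent of $t$. Put $C_0:=2me^{i\omega^0}/\hbar$. Let $V_0$ and $V_0'$ be functions on $\mathbb{C}$ such that $$\partial_t V_0(\psi)=\mathrm{Re}\,\big(\partial_t\overline{\psi}\,V_0'(\psi)\big)$$ for every function $\psi=\psi(t,x)$. Assume $C_0\in\mathbb{R}$ and $e^{2i(\theta+\omega^1)}/e^{2i\omega^0}\in\mathbb{R}$. Let $\phi_\ast=\phi_\ast(t,x)$, $(t,x)\in\mathbb{R}\times\mathbb{R}^n$, be a complex-valued solution of $$-\frac{1}{c^2}\frac{e^{2i(\theta+\omega^1)}}{e^{2i\omega^0}}\left(\partial_t^2+\frac{n\,\partial_t a_\ast}{a_\ast}\partial_t+\Big(\frac{mc^2e^{i\omega^0}}{\hbar}\Big)^2\right)\phi_\ast+\frac{1}{|a_\ast|^2}\Delta_x\phi_\ast-V_0'(\phi_\ast)=0,$$ where $\Delta_x=\sum_{j=1}^n\partial^2/(\partial x^j)^2$, which is sufficiently smooth and decays at spatial infinity so that all integrals below are finite and integrals over $\mathbb{R}^n$ of spatial divergences vanish. Then for every $t$, $$\int_{\mathbb{R}^n}e^0(t,x)\,dx+\int_0^t\int_{\mathbb{R}^n}e^{n+1}(s,x)\,dx\,ds=\int_{\mathbb{R}^n}e^0(0,x)\,dx,$$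 where $$e^0:=\frac{e^{2i(\theta+\omega^1)}}{c^2e^{2i\omega^0}}\left(|\partial_t\phi_\ast|^2+\frac{C_0^2c^4}{4}|\phi_\ast|^2\right)+\frac{1}{|a_\ast|^2}\sum_{j=1}^n|\partial_{x^j}\phi_\ast|^2+2V_0(\phi_\ast)$$ and $$e^{n+1}:=\frac{e^{2i(\theta+\omega^1)}}{c^2e^{2i\omega^0}}\,2\,\mathrm{Re}\Big(\frac{n\,\partial_t a_\ast}{a_\ast}\Big)|\partial_t\phi_\ast|^2-\partial_t\Big(\frac{1}{|a_\ast|^2}\Big)\sum_{j=1}^n|\partial_{x^j}\phi_\ast|^2.$$
   Context: Here $a_\ast$ plays the role of a (complex) scale-function of space; $t$ is a real time variable and $x=(x^1,\dots,x^n)\in\mathbb{R}^n$. *)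

From HB Require Import structures.
From mathcomp Require Import all_boot all_order all_algebra.
From mathcomp Require Import all_classical all_reals all_analysis.
From mathcomp Require Import complex.

Set Implicit Arguments.
Unset Strict Implicit.
Unset Printing Implicit Defensive.

Import Order.TTheory GRing.Theory Num.Theory.
Import numFieldNormedType.Exports.
Local Open Scope classical_set_scope.
Local Open Scope ring_scope.
Local Open Scope complex_scope.

Section Defs.
Variable R : realType.

Definition creal (z : R[i]) : R := complex.Re z.
Definition cimag (z : R[i]) : R := complex.Im z.

Definition expi (w : R) : R[i] := cos w +i* sin w.

Definition abs2 (z : R[i]) : R := (creal z) ^+ 2 + (cimag z) ^+ 2.

Definition cderivable (f : R -> R[i]) (t : R) : Prop :=
  derivable (fun s => creal (f s)) t 1 /\ derivable (fun s => cimag (f s)) t 1.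

Definition cderive (f : R -> R[i]) (t : R) : R[i] :=
  derive1 (fun s => creal (f s)) t +i* derive1 (fun s => cimag (f s)) t.

Definition evec (n : nat) (j : 'I_n) : 'rV[R]_n := delta_mx 0 j.

Definition dt (n : nat) (f : R -> 'rV[R]_n -> R[i]) (t : R) (x : 'rV[R]_n)
  : R[i] := cderive (fun s => f s x) t.

Definition dx (n : nat) (j : 'I_n) (f : R -> 'rV[R]_n -> R[i]) (t : R)
  (x : 'rV[R]_n) : R[i] := cderive (fun h => f t (x + h *: evec j)) 0.

Definition dxR (n : nat) (j : 'I_n) (g : 'rV[R]_n -> R) (x : 'rV[R]_n) : R :=
  derive1 (fun h => g (x + h *: evec j)) 0.

(* Integral over R^n (Lebesgue measure), realised as the iterated
   Lebesgue integral over the successive coordinates, together with the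
   corresponding integrability predicate. *)
Fixpoint iint (n : nat) : ('rV[R]_n -> R) -> R :=
  match n with
  | 0 => fun f => f 0
  | k.+1 => fun f =>
      Rintegral (@lebesgue_measure R) setT
        (fun y : R => iint (fun x : 'rV[R]_k => f (row_mx y%:M x)))
  end.

Fixpoint iintegrable (n : nat) : ('rV[R]_n -> R) -> Prop :=
  match n with
  | 0 => fun _ => True
  | k.+1 => fun f =>
      (@lebesgue_measure R).-integrable setT
        (fun y : R => (iint (fun x : 'rV[R]_k => f (row_mx y%:M x)))%:E)
      /\ forall y : R, iintegrable (fun x : 'rV[R]_k => f (row_mx y%:M x))
  end.

Definition cint (n : nat) (f : 'rV[R]_n -> R[i]) : R[i] :=
  iint (fun x => creal (f x)) +i* iint (fun x => cimag (f x)).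

Definition cintegrable (n : nat) (f : 'rV[R]_n -> R[i]) : Prop :=
  iintegrable (fun x => creal (f x)) /\ iintegrable (fun x => cimag (f x)).

Definition tint (a b : R) (f : R -> R) : R :=
  if a <= b then Rintegral (@lebesgue_measure R) `[a, b] f
  else - Rintegral (@lebesgue_measure R) `[b, a] f.

Definition ctint (a b : R) (f : R -> R[i]) : R[i] :=
  tint a b (fun s => creal (f s)) +i* tint a b (fun s => cimag (f s)).

Definition Kcoef (theta w0 w1 : R) : R[i] :=
  expi (2 * (theta + w1)) / expi (2 * w0).

Definition C0coef (m hbar w0 : R) : R[i] := (2 * m)%:C * expi w0 / hbar%:C.

Definition e0 (n : nat) (c m hbar theta w0 w1 : R) (a : R -> R[i])
  (V0 : R[i] -> R) (phi : R -> 'rV[R]_n -> R[i]) (t : R) (x : 'rV[R]_n)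
  : R[i] :=
  Kcoef theta w0 w1 / (c ^+ 2)%:C *
    ((abs2 (dt phi t x))%:C
     + (C0coef m hbar w0 ^+ 2 * (c ^+ 4)%:C / 4) * (abs2 (phi t x))%:C)
  + (1 / abs2 (a t))%:C * (\sum_(j < n) abs2 (dx j phi t x))%:C
  + (2 * V0 (phi t x))%:C.

Definition en1 (n : nat) (c theta w0 w1 : R) (a : R -> R[i])
  (phi : R -> 'rV[R]_n -> R[i]) (t : R) (x : 'rV[R]_n) : R[i] :=
  Kcoef theta w0 w1 / (c ^+ 2)%:C * 2
    * (creal (n%:R * cderive a t / a t))%:C * (abs2 (dt phi t x))%:C
  - (derive1 (fun s => 1 / abs2 (a s)) t)%:C
    * (\sum_(j < n) abs2 (dx j phi t x))%:C.

Definition flux (n : nat) (j : 'I_n) (phi : R -> 'rV[R]_n -> R[i]) (t : R)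
  (x : 'rV[R]_n) : R := creal (conjc (dt phi t x) * dx j phi t x).

Definition divflux (n : nat) (phi : R -> 'rV[R]_n -> R[i]) (t : R)
  (x : 'rV[R]_n) : R := \sum_(j < n) dxR j (flux j phi t) x.

End Defs.

Arguments evec {R n} j.

From HB Require Import structures.
From mathcomp Require Import all_boot all_order all_algebra.
From mathcomp Require Import all_classical all_reals all_analysis.
From mathcomp Require Import complex.
From mathcomp Require Import ring lra.

Set Implicit Arguments.
Unset Strict Implicit.
Unset Printing Implicit Defensive.

Import Order.TTheory GRing.Theory Num.Theory.
Import numFieldNormedType.Exports.
Local Open Scope classical_set_scope.
Local Open Scope ring_scope.
Local Open Scope complex_scope.

(* Multiply the equation by conj(d_t phi) and take real parts. Since the
   coefficients are real, every term becomes an exact time derivative or a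
   spatial divergence, except the friction term Re(n a'/a) |d_t phi|^2 and the
   one produced by the time dependence of the coefficient 1/|a|^2 of the
   gradient energy:
     d_t e^0 = - e^{n+1} + (2/|a|^2) sum_j d_{x^j} Re(conj(d_t phi) d_{x^j} phi).
   Integrating over R^n removes the divergence, and the fundamental theorem of
   calculus integrates d/dt (int e^0) = - int e^{n+1} in time. *)

Section ComplexParts.
Variable R : realType.
Implicit Types z w : R[i].

Lemma crealD z w : creal (z + w) = creal z + creal w.
Proof. by case: z; case: w. Qed.

Lemma creal_sum n (F : 'I_n -> R[i]) :
  creal (\sum_(j < n) F j) = \sum_(j < n) creal (F j).
Proof. exact: (big_morph _ crealD). Qed.

Lemma creal_conjcM z w : creal (z^* * w) = creal z * creal w + cimag z * cimag w.
Proof. by case: z => ? ?; case: w => ? ?; rewrite /creal /cimag /=; ring. Qed.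

Lemma creal_conjcMC z w : creal (z^* * w) = creal (w^* * z).
Proof. by rewrite !creal_conjcM mulrC [cimag w * _]mulrC. Qed.

Lemma creal_conjcM_sum n z (F : 'I_n -> R[i]) :
  creal (z^* * \sum_(j < n) F j) = \sum_(j < n) creal (z^* * F j).
Proof. by rewrite mulr_sumr creal_sum. Qed.

Lemma creal_conjcM_expand z u w p s (k C b : R) :
  creal (z^* * ((- k)%:C * (u + w * z + C%:C * p) + b%:C * s)) =
  - k * (creal (z^* * u) + creal w * abs2 z + C * creal (z^* * p))
  + b * creal (z^* * s).
Proof.
case: z => ? ?; case: u => ? ?; case: w => ? ?; case: p => ? ?; case: s => ? ?.
by rewrite /creal /cimag /abs2 /=; ring.
Qed.

Lemma abs2_neq0 z : z != 0 -> abs2 z != 0.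
Proof.
case: z => x y; apply: contraNneq; rewrite /abs2 /creal /cimag /= => xy0.
have x0 : x = 0 by nra.
have y0 : y = 0 by nra.
by rewrite x0 y0.
Qed.

Lemma cimag0_real z : cimag z = 0 -> z = (creal z)%:C.
Proof. by case: z => x y /= ->. Qed.

End ComplexParts.

Section ComplexDerivative.
Variable R : realType.
Implicit Types f g : R -> R[i].

Lemma is_derive_derive1 (h : R -> R) t :
  derivable h t 1 -> is_derive t 1 h (derive1 h t).
Proof. by rewrite derive1E; exact: derivableP. Qed.

Lemma is_derive_creal f t : cderivable f t ->
  is_derive t 1 (fun s => creal (f s)) (creal (cderive f t)).
Proof. by case=> /is_derive_derive1. Qed.

Lemma is_derive_cimag f t : cderivable f t ->
  is_derive t 1 (fun s => cimag (f s)) (cimag (cderive f t)).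
Proof. by case=> _ /is_derive_derive1. Qed.

Lemma is_derive_creal_conjcM f g t : cderivable f t -> cderivable g t ->
  is_derive t 1 (fun s => creal ((f s)^* * g s))
    (creal ((cderive f t)^* * g t + (f t)^* * cderive g t)).
Proof.
move=> /[dup] /is_derive_creal df /is_derive_cimag df'.
move=> /[dup] /is_derive_creal dg /is_derive_cimag dg'.
under eq_fun do rewrite creal_conjcM.
apply: is_derive_eq (is_deriveD (is_deriveM df dg) (is_deriveM df' dg')) _.
by rewrite crealD !creal_conjcM -![_ *: _]/(_ * _); ring.
Qed.

Lemma is_derive_abs2 f t : cderivable f t ->
  is_derive t 1 (fun s => abs2 (f s)) (2 * creal ((f t)^* * cderive f t)).
Proof.
move=> df; rewrite mulr_natl mulr2n.
have := is_derive_creal_conjcM df df; rewrite crealD creal_conjcMC.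
by under eq_fun do rewrite creal_conjcM -!expr2.
Qed.

Lemma derivable_inv_abs2 f t : f t != 0 -> cderivable f t ->
  derivable (fun s => 1 / abs2 (f s)) t 1.
Proof.
move=> f0 /is_derive_abs2 df.
rewrite (_ : (fun s => _) = fun s => (abs2 (f s))^-1); last first.
  by apply: funext => s; rewrite div1r.
apply: derivableV; [exact: abs2_neq0 | exact: ex_derive].
Qed.

End ComplexDerivative.

Section IteratedIntegral.
Variable R : realType.

Lemma iint_cst0 n : iint (fun _ : 'rV[R]_n => 0) = 0.
Proof.
by elim: n => [|n IHn] //=; rewrite IHn Rintegral_cst // mul0r.
Qed.

Lemma iint_lincomb n (f g : 'rV[R]_n -> R) (k l : R) :
  iintegrable f -> iintegrable g ->
  iintegrable (fun x => k * f x + l * g x) /\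
  iint (fun x => k * f x + l * g x) = k * iint f + l * iint g.
Proof.
elim: n f g => [//|n IHn] f g /= [If f_sec] [Ig g_sec].
have sec_comb y : iint (fun x => k * f (row_mx y%:M x) + l * g (row_mx y%:M x))
    = k * iint (fun x => f (row_mx y%:M x)) + l * iint (fun x => g (row_mx y%:M x)).
  by have [] := IHn _ _ (f_sec y) (g_sec y).
rewrite (funext sec_comb).
have Ikf := integrableZl measurableT k If.
have Ilg := integrableZl measurableT l Ig.
split; last by rewrite RintegralD // !RintegralZl.
split; last by move=> y; have [] := IHn _ _ (f_sec y) (g_sec y).
move: (integrableD measurableT Ikf Ilg); apply: eq_integrable => // y _ /=.
by rewrite sec_comb EFinD -!EFinM.
Qed.

End IteratedIntegral.

Lemma cint_realC (R : realType) n (f : 'rV[R]_n -> R) :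
  cint (fun x => (f x)%:C) = (iint f)%:C.
Proof. by rewrite /cint /= iint_cst0. Qed.

Section OrientedIntegral.
Variable R : realType.

Lemma tint_cst0 a b : tint a b (fun _ : R => 0) = 0.
Proof. by rewrite /tint !Rintegral_cst // !mul0r oppr0 if_same. Qed.

Lemma ctint_real a b (f : R -> R[i]) : (forall s, cimag (f s) = 0) ->
  ctint a b f = (tint a b (fun s => creal (f s)))%:C.
Proof. by move=> f_real; rewrite /ctint (funext f_real) tint_cst0. Qed.

Lemma Rintegral_antiderivative (E F : R -> R) (a b : R) :
  (forall t : R, is_derive t (1 : R) E (- F t)) -> continuous F -> a < b ->
  Rintegral (@lebesgue_measure R) `[a, b] F = E a - E b.
Proof.
move=> dE cF ab.
have cNE : continuous (fun s => - E s).
  move=> t; apply: differentiable_continuous; apply/derivable1_diffP.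
  by apply: derivableN; exact: ex_derive.
rewrite /Rintegral (@continuous_FTC2 _ F (fun s => - E s) a b ab) /=.
- by rewrite opprK addrC.
- exact: continuous_subspaceT.
- split.
  + by move=> t _; apply: derivableN; exact: ex_derive.
  + exact: cvg_at_right_filter (cNE a).
  + exact: cvg_at_left_filter (cNE b).
- by move=> t _; rewrite derive1E deriveN ?derive_val ?opprK //; exact: ex_derive.
Qed.

Lemma tint_antiderivative (E F : R -> R) (a b : R) :
  (forall t : R, is_derive t (1 : R) E (- F t)) -> continuous F ->
  E b + tint a b F = E a.
Proof.
move=> dE cF; rewrite /tint.
case: (ltgtP a b) => [ab|ba|<-].
- by rewrite (Rintegral_antiderivative dE cF ab) addrC subrK.
- by rewrite (Rintegral_antiderivative dE cF ba) opprB addrC subrK.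
- by rewrite set_itv1 Rintegral_set1 addr0.
Qed.

End OrientedIntegral.

Section EnergyIdentity.
Variables (R : realType) (n : nat) (k C : R) (a : R -> R[i]).
Variables (V0 : R[i] -> R) (V0' : R[i] -> R[i]) (phi : R -> 'rV[R]_n -> R[i]).

(* e^0 and e^{n+1} of the statement, with the real coefficients
   k = e^{2i(theta+w1)} / (c^2 e^{2i w0}) and C = C0^2 c^4 / 4. *)
Definition energy_density t x : R :=
  k * (abs2 (dt phi t x) + C * abs2 (phi t x))
  + 1 / abs2 (a t) * \sum_(j < n) abs2 (dx j phi t x) + 2 * V0 (phi t x).

Definition energy_dissipation t x : R :=
  k * 2 * creal (n%:R * cderive a t / a t) * abs2 (dt phi t x)
  - derive1 (fun s => 1 / abs2 (a s)) t * \sum_(j < n) abs2 (dx j phi t x).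

Hypothesis a_neq0 : forall t, a t != 0.
Hypothesis a_derivable : forall t, cderivable a t.
Hypothesis V0_chain : forall (psi : R -> R[i]) t, cderivable psi t ->
  derivable (fun s => V0 (psi s)) t 1 /\
  derive1 (fun s => V0 (psi s)) t = creal ((cderive psi t)^* * V0' (psi t)).
Hypothesis phi_regular : forall t x,
  cderivable (fun s => phi s x) t /\
  cderivable (fun s => dt phi s x) t /\
  forall j : 'I_n,
    cderivable (fun h => phi t (x + h *: evec j)) 0 /\
    cderivable (fun h => dx j phi t (x + h *: evec j)) 0 /\
    cderivable (fun h => dt phi t (x + h *: evec j)) 0 /\
    cderivable (fun s => dx j phi s x) t /\
    dt (dx j phi) t x = dx j (dt phi) t x.
Hypothesis phi_solution : forall t x,
  V0' (phi t x) =
    (- k)%:C * (dt (dt phi) t x + n%:R * cderive a t / a t * dt phi t x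
                + C%:C * phi t x)
    + (1 / abs2 (a t))%:C * \sum_(j < n) dx j (dx j phi) t x.

Lemma divflux_expand t x : divflux phi t x =
  \sum_(j < n) creal ((dx j phi t x)^* * dt (dx j phi) t x)
  + \sum_(j < n) creal ((dt phi t x)^* * dx j (dx j phi) t x).
Proof.
rewrite -big_split; apply: eq_bigr => j _.
have [_ [_ /(_ j) [_ [dgrad [dvel [_ dtx]]]]]] := phi_regular t x.
rewrite /dxR /flux derive1E.
have [_ ->] := is_derive_creal_conjcM dvel dgrad.
have x0 : x + 0 *: evec j = x by rewrite scale0r addr0.
by rewrite x0 crealD dtx creal_conjcMC.
Qed.

Lemma solution_tested_dt t x :
  creal ((dt phi t x)^* * V0' (phi t x)) =
    - k * (creal ((dt phi t x)^* * dt (dt phi) t x)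
           + creal (n%:R * cderive a t / a t) * abs2 (dt phi t x)
           + C * creal ((phi t x)^* * dt phi t x))
    + 1 / abs2 (a t) * \sum_(j < n) creal ((dt phi t x)^* * dx j (dx j phi) t x).
Proof.
by rewrite phi_solution creal_conjcM_expand creal_conjcM_sum
  (creal_conjcMC (dt phi t x) (phi t x)).
Qed.

Lemma is_derive_energy_density (t : R) x :
  is_derive t (1 : R) (energy_density ^~ x)
    (- energy_dissipation t x + 2 * (1 / abs2 (a t)) * divflux phi t x).
Proof.
have [dphi [dvel dx_regular]] := phi_regular t x.
have dgrad j : cderivable (fun s => dx j phi s x) t.
  by have [_ [_ [_ []]]] := dx_regular j.
have dinv : is_derive t 1 (fun s => 1 / abs2 (a s))
    (derive1 (fun s => 1 / abs2 (a s)) t).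
  exact: is_derive_derive1 (derivable_inv_abs2 (a_neq0 t) (a_derivable t)).
have dgrad2 : is_derive t 1 (fun s => \sum_(j < n) abs2 (dx j phi s x))
    (2 * \sum_(j < n) creal ((dx j phi t x)^* * dt (dx j phi) t x)).
  rewrite mulr_sumr.
  by have := is_derive_sum (fun j => is_derive_abs2 (dgrad j)); rewrite fct_sumE.
have dpot : is_derive t 1 (fun s => V0 (phi s x))
    (creal ((dt phi t x)^* * V0' (phi t x))).
  by have [dV <-] := V0_chain dphi; exact: is_derive_derive1.
have := is_deriveD (is_deriveD
   (is_deriveM (is_derive_cst k t (1 : R))
     (is_deriveD (is_derive_abs2 dvel)
        (is_deriveM (is_derive_cst C t (1 : R)) (is_derive_abs2 dphi))))
   (is_deriveM dinv dgrad2))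
   (is_deriveM (is_derive_cst (2 : R) t (1 : R)) dpot).
move=> /is_derive_eq; apply.
rewrite solution_tested_dt divflux_expand /energy_dissipation /cst.
rewrite -/(dt (dt phi) t x) -/(dt phi t x) -![_ *: _]/(_ * _).
rewrite !mulr0 !addr0.
(* Abstracting the atoms keeps [ring] from unfolding the derivatives inside them. *)
generalize (creal ((dt phi t x)^* * dt (dt phi) t x))
  (creal ((phi t x)^* * dt phi t x)) (creal (n%:R * cderive a t / a t))
  (abs2 (dt phi t x)) (1 / abs2 (a t)) (derive1 (fun s => 1 / abs2 (a s)) t)
  (\sum_(j < n) abs2 (dx j phi t x))
  (\sum_(j < n) creal ((dx j phi t x)^* * dt (dx j phi) t x))
  (\sum_(j < n) creal ((dt phi t x)^* * dx j (dx j phi) t x)).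
move=> A1 A2 w B b db S0 S1 S2.
ring.
Qed.

Lemma iint_derive1_energy_density t :
  iintegrable (energy_dissipation t) ->
  iintegrable (divflux phi t) -> iint (divflux phi t) = 0 ->
  iint (fun x => derive1 (energy_density ^~ x) t) = - iint (energy_dissipation t).
Proof.
move=> dissipation_integrable divflux_integrable divflux_vanish.
have -> : (fun x => derive1 (energy_density ^~ x) t) = fun x =>
    (-1) * energy_dissipation t x + 2 * (1 / abs2 (a t)) * divflux phi t x.
  apply: funext => x; rewrite derive1E mulN1r.
  by have [_ ->] := is_derive_energy_density t x.
have [_ ->] := iint_lincomb (-1) (2 * (1 / abs2 (a t)))
  dissipation_integrable divflux_integrable.
by rewrite divflux_vanish mulr0 addr0 mulN1r.
Qed.

Lemma energy_balance t :
  (forall s, iintegrable (energy_dissipation s)) ->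
  (forall s, iintegrable (divflux phi s) /\ iint (divflux phi s) = 0) ->
  (forall s, derivable (fun r => iint (energy_density r)) s 1 /\
     derive1 (fun r => iint (energy_density r)) s
       = iint (fun x => derive1 (energy_density ^~ x) s)) ->
  continuous (fun s => iint (energy_dissipation s)) ->
  iint (energy_density t) + tint 0 t (fun s => iint (energy_dissipation s))
    = iint (energy_density 0).
Proof.
move=> dissipation_integrable divflux_vanish energy_derivable dissipation_cont.
apply: (tint_antiderivative (E := fun s => iint (energy_density s)))
  dissipation_cont.
move=> s; have [divflux_integrable divflux0] := divflux_vanish s.
have [derivable_s derive_s] := energy_derivable s.
apply: DeriveDef derivable_s _.
by rewrite -derive1E derive_s iint_derive1_energy_density.
Qed.

End EnergyIdentity.

Section RealCoefficients.
Variables (R : realType) (n : nat) (c m hbar w0 w1 theta : R).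
Hypothesis hbar_neq0 : hbar != 0.
Hypothesis C0_real : cimag (C0coef m hbar w0) = 0.
Hypothesis K_real : cimag (Kcoef theta w0 w1) = 0.

Let k := creal (Kcoef theta w0 w1) / c ^+ 2.
Let C := creal (C0coef m hbar w0) ^+ 2 * c ^+ 4 / 4.

Lemma Kcoef_realC : Kcoef theta w0 w1 / (c ^+ 2)%:C = k%:C.
Proof. by rewrite {1}(cimag0_real K_real) fmorph_div. Qed.

Lemma C0coef_realC : C0coef m hbar w0 ^+ 2 * (c ^+ 4)%:C / 4 = C%:C.
Proof.
rewrite {1}(cimag0_real C0_real).
by rewrite !(fmorph_div, rmorphM, rmorphXn, rmorph_nat).
Qed.

Lemma mass_coef_realC : ((m * c ^+ 2)%:C * expi w0 / hbar%:C) ^+ 2 = C%:C.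
Proof.
rewrite -C0coef_realC /C0coef !(rmorphM, rmorphXn, rmorph_nat).
by field; rewrite fmorph_eq0.
Qed.

Variables (a : R -> R[i]) (V0 : R[i] -> R) (V0' : R[i] -> R[i]).
Variable phi : R -> 'rV[R]_n -> R[i].

Lemma e0_realC : e0 c m hbar theta w0 w1 a V0 phi =
  fun t x => (energy_density k C a V0 phi t x)%:C.
Proof.
apply: funext => t; apply: funext => x.
rewrite /e0 Kcoef_realC C0coef_realC.
by rewrite !(rmorphD, rmorphM, rmorph_nat).
Qed.

Lemma en1_realC :
  en1 c theta w0 w1 a phi = fun t x => (energy_dissipation k a phi t x)%:C.
Proof.
apply: funext => t; apply: funext => x.
rewrite /en1 Kcoef_realC.
by rewrite !(rmorphB, rmorphM, rmorph_nat).
Qed.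

Lemma equation_realC t x :
  - (1 / (c ^+ 2)%:C) * Kcoef theta w0 w1 *
    (dt (dt phi) t x + n%:R * cderive a t / a t * dt phi t x
     + ((m * c ^+ 2)%:C * expi w0 / hbar%:C) ^+ 2 * phi t x)
  + (1 / abs2 (a t))%:C * (\sum_(j < n) dx j (dx j phi) t x)
  - V0' (phi t x) = 0 ->
  V0' (phi t x) =
    (- k)%:C * (dt (dt phi) t x + n%:R * cderive a t / a t * dt phi t x
                + C%:C * phi t x)
    + (1 / abs2 (a t))%:C * \sum_(j < n) dx j (dx j phi) t x.
Proof.
have -> : - (1 / (c ^+ 2)%:C) * Kcoef theta w0 w1 = (- k)%:C.
  by rewrite mul1r mulNr mulrC Kcoef_realC rmorphN.
by rewrite mass_coef_realC => /eqP; rewrite subr_eq0 => /eqP.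
Qed.

End RealCoefficients.

Theorem lemma6p1 (R : realType) (n : nat) (c m hbar w0 w1 theta : R)
  (a : R -> R[i]) (V0 : R[i] -> R) (V0' : R[i] -> R[i])
  (phi : R -> 'rV[R]_n -> R[i]) :
  (0 < n)%N -> 0 < c -> hbar != 0 ->
  - (pi / 2) < w0 <= pi / 2 -> - (pi / 2) < w1 <= pi / 2 ->
  (* a is nowhere vanishing, differentiable, with constant argument theta *)
  (forall t, a t != 0) ->
  (forall t, cderivable a t) ->
  (forall t, a t = (Num.sqrt (abs2 (a t)))%:C * expi theta) ->
  (* d/dt V0(psi) = Re(conj(d/dt psi) V0'(psi)) for every psi *)
  (forall (psi : R -> R[i]) (t : R), cderivable psi t ->
     derivable (fun s => V0 (psi s)) t 1 /\
     derive1 (fun s => V0 (psi s)) t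
       = creal (conjc (cderive psi t) * V0' (psi t))) ->
  (* C0 and e^{2i(theta+w1)}/e^{2i w0} are real *)
  cimag (C0coef m hbar w0) = 0 ->
  cimag (Kcoef theta w0 w1) = 0 ->
  (* smoothness of phi *)
  (forall t x,
     cderivable (fun s => phi s x) t /\
     cderivable (fun s => dt phi s x) t /\
     forall j : 'I_n,
       cderivable (fun h => phi t (x + h *: evec j)) 0 /\
       cderivable (fun h => dx j phi t (x + h *: evec j)) 0 /\
       cderivable (fun h => dt phi t (x + h *: evec j)) 0 /\
       cderivable (fun s => dx j phi s x) t /\
       dt (dx j phi) t x = dx j (dt phi) t x) ->
  (* phi solves the equation *)
  (forall t x,
     - (1 / (c ^+ 2)%:C) * Kcoef theta w0 w1 *
       (dt (dt phi) t x + n%:R * cderive a t / a t * dt phi t x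
        + ((m * c ^+ 2)%:C * expi w0 / hbar%:C) ^+ 2 * phi t x)
     + (1 / abs2 (a t))%:C * (\sum_(j < n) dx j (dx j phi) t x)
     - V0' (phi t x) = 0) ->
  (* decay at spatial infinity: the integrals are finite ... *)
  (forall t, cintegrable (e0 c m hbar theta w0 w1 a V0 phi t)) ->
  (forall t, cintegrable (en1 c theta w0 w1 a phi t)) ->
  (* ... the integral of the spatial divergence vanishes ... *)
  (forall t, iintegrable (divflux phi t) /\ iint (divflux phi t) = 0) ->
  (* ... and the energy may be differentiated under the integral sign,
     with the time integrand continuous *)
  (forall t,
     cderivable (fun s => cint (e0 c m hbar theta w0 w1 a V0 phi s)) t /\
     cderive (fun s => cint (e0 c m hbar theta w0 w1 a V0 phi s)) t
       = cint (fun x => cderive (fun s => e0 c m hbar theta w0 w1 a V0 phi s x) t)) ->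
  continuous (fun s => creal (cint (en1 c theta w0 w1 a phi s))) ->
  continuous (fun s => cimag (cint (en1 c theta w0 w1 a phi s))) ->
  forall t : R,
    cint (e0 c m hbar theta w0 w1 a V0 phi t)
    + ctint 0 t (fun s => cint (en1 c theta w0 w1 a phi s))
    = cint (e0 c m hbar theta w0 w1 a V0 phi 0).
Proof.
move=> _ _ hbar_neq0 _ _ a_neq0 a_derivable _ V0_chain C0_real K_real phi_regular
  phi_eq _ en1_integrable divflux_vanish e0_derivable en1_continuous _ t.
have phi_solution s x := equation_realC hbar_neq0 C0_real K_real (phi_eq s x).
rewrite (e0_realC c C0_real K_real) (en1_realC c K_real)
  in e0_derivable en1_integrable en1_continuous *.
rewrite ctint_real => [|s]; last by rewrite cint_realC.
rewrite !cint_realC -rmorphD; apply: f_equal.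
apply: (energy_balance a_neq0 a_derivable V0_chain phi_regular phi_solution)
  => [s|s|s|]; last exact: en1_continuous.
- exact: (en1_integrable s).1.
- exact: divflux_vanish.
- have [[energy_derivable _] energy_derive] := e0_derivable s.
  split; first exact: energy_derivable.
  have energy_derive_re := congr1 (@creal R) energy_derive.
  exact: energy_derive_re.
Qed.
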